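(* Let $G=(V,w)$ be a weighted graph and let $Z\in\mathcal{M}(G)$ be a crossless non-star minimum cut with shores $X_0$ and $X_1=V\setminus X_0$. For $b\in\{0,1\}$ let $\mathcal{M}_b=\{S\in\mathcal{M}(G): S\subseteq Z\cup E(X_b)\}$, and let $\{G_0,G_1\}=\mathrm{sep}(G,Z)$. Then for each $b\in\{0,1\}$, $\dim\,\mathrm{span}\{\chi(S): S\in\mathcal{M}_b\}=\mathrm{cdim}(G_b)$.
   Context: A weighted graph $G=(V,w)$ has nonnegative weights on unordered pairs of distinct vertices; its edge set is $E=\{e:w(e)>0\}$. For $X\subseteq V$, $E(X)$ is the set of edges with both endpoints in $X$. For $\emptyset\ne X\subsetneq V$, $\Delta(X)$ is the set of edges with exactly one endpoint in $X$ (a cut with shores $X$, $V\setminus X$). A cut is a star cut if one shore is a single vertex, otherwise non-star. $\mathcal{M}(G)$ is the set of minimum-weight cuts; $\chi(S)$ is the characteristic vector of $S$ indexed by the edges of the graph in question; $\mathrm{cdim}(G)=\dim\,\mathrm{span}\{\chi(S):S\in\mathcal{M}(G)\}$. Sets $X,Y$ cross if $X\cap Y$, $X\setminus Y$, $Y\setminus X$, $V\setminus(X\cup Y)$ are all nonempty; cuts cross if their shores cross. A mincut is crossless if no other mincut crosses it. The separation $\mathrm{sep}(G,Z)$ along a cut $Z$ with shores $X_0,X_1$ is the pair of graphs $G_b=(X_b\cup\{v_{1-b}\},w_b)$, $b\in\{0,1\}$, with new vertices $v_0,v_1$, where $w_b(\{x,y\})=w(\{x,y\})$ for $x,y\in X_b$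 and $w_b(\{x,v_{1-b}\})=\sum_{y\in X_{1-b}}w(\{x,y\})$ for $x\in X_b$. *)

From HB Require Import structures.
From mathcomp Require Import all_boot all_order all_algebra.
Set Implicit Arguments. Unset Strict Implicit. Unset Printing Implicit Defensive.
Import Order.TTheory GRing.Theory Num.Theory.
Local Open Scope ring_scope.

(* A weighted graph on the finite vertex type V is given by a weight function
   w on subsets of V; only its values on 2-element subsets (unordered pairs of
   distinct vertices) are meaningful. *)
Section WeightedGraph.
Variables (R : realFieldType) (V : finType).
Implicit Types (w : {set V} -> R) (X Y : {set V}) (S T : {set {set V}}).

Definition edges w : {set {set V}} := [set e : {set V} | (#|e| == 2)%N && (0 < w e)].

Definition EX w X : {set {set V}} := [set e in edges w | e \subset X].

Definition delta w X : {set {set V}} := [set e in edges w | #|e :&: X| == 1%N].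

Definition proper_shore X : bool := (X != set0) && (X != setT).

Definition is_cut w S : bool := [exists X : {set V}, proper_shore X && (S == delta w X)].

Definition cut_weight w S : R := \sum_(e in S) w e.

Definition mincuts w : {set {set {set V}}} :=
  [set S | is_cut w S &&
     [forall X : {set V}, proper_shore X ==> (cut_weight w S <= cut_weight w (delta w X))]].

Definition crossing X Y : bool :=
  [&& X :&: Y != set0, X :\: Y != set0, Y :\: X != set0 & ~: (X :|: Y) != set0].

Definition cuts_cross w S T : bool :=
  [exists X : {set V}, exists Y : {set V},
     [&& S == delta w X, T == delta w Y & crossing X Y]].

Definition crossless w Z : bool :=
  (Z \in mincuts w) &&
  [forall S in mincuts w, (S != Z) ==> ~~ cuts_cross w S Z].

Definition star_cut w S : bool :=
  [exists X : {set V}, [&& S == delta w X, proper_shore X &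
                          ((#|X| == 1%N) || (#|~: X| == 1%N))]].

Definition edge_t w := {e : {set V} | e \in edges w}.

Definition chi w S : 'rV[R]_(#|{: edge_t w}|) :=
  \row_(j < #|{: edge_t w}|) ((val (enum_val j) \in S)%:R).

Definition span_dim w (F : {set {set {set V}}}) : nat :=
  \rank (\sum_(S in F) <<chi w S>>)%MS.

Definition cdim w : nat := span_dim w (mincuts w).

(* Separation along the cut with shores X and ~: X: the graph on the vertex set
   X u {new vertex}, the new vertex being [None]. *)
Definition sep_vertex X := option {x : V | x \in X}.

Definition sepw w X (e : {set sep_vertex X}) : R :=
  if None \in e then
    \sum_(x : {x : V | x \in X} | Some x \in e) \sum_(y in ~: X) w [set val x; y]
  else w (val @: [set x : {x : V | x \in X} | Some x \in e]).

End WeightedGraph.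
Arguments sepw {R V} w X e.

From HB Require Import structures.
From mathcomp Require Import all_boot all_order all_algebra.
Import Order.TTheory GRing.Theory Num.Theory.
Local Open Scope ring_scope.
Set Implicit Arguments. Unset Strict Implicit. Unset Printing Implicit Defensive.

(* Let Z = Delta(X) be a crossless mincut of G and G_X the side of sep(G, Z)
   whose vertices are X plus one new vertex (None) standing for V \ X.
   Every vertex set U of G_X has a preimage ext U in V under the projection
   pv : V -> X + {None}, and
   - the weight of Delta_{G_X}(U) equals the weight of Delta_G(ext U),
     since the weights of G_X are sums of weights of G over fibres of pv;
   - an edge e of G lies in Delta_G(ext U) iff its image pv(e) lies in
     Delta_{G_X}(U), so chi(Delta_G(ext U)) = chi(Delta_{G_X}(U)) * M for an
     incidence matrix M, which is row-free since every edge of G_X is the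
     image of an edge of G.
   Hence mincuts of G_X lift to mincuts of G inside Z u E(X) (section
   Correspondence); conversely, as Z crosses no other mincut, every such
   mincut has a shore Y that is either inside X or contains V \ X, i.e.
   Y = ext(pv(Y)).  The two families of characteristic vectors thus
   correspond under the injective map "* M", so their spans have the same
   dimension (span_dim_transfer).  The theorem is the case X = X_b, using
   Delta(~: X0) = Delta(X0). *)

Lemma card_pairI (T : finType) (x y : T) (Y : {set T}) : x != y ->
  #|[set x; y] :&: Y| = ((x \in Y) + (y \in Y))%N.
Proof.
move=> nxy.
have -> : #|[set x; y] :&: Y| = #|[seq z <- [:: x; y] | z \in Y]|.
  by apply: eq_card => z; rewrite !inE mem_filter !inE andbC.
rewrite (card_uniqP _) ?filter_uniq /= ?inE ?nxy //.
by case: (x \in Y); case: (y \in Y).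
Qed.

Lemma proper_shoreC (V : finType) (X : {set V}) : proper_shore (~: X) = proper_shore X.
Proof.
have eqC (A B : {set V}) : (~: A == B) = (A == ~: B) by rewrite -(inj_eq (@setC_inj _)) setCK.
by rewrite /proper_shore !eqC setC0 setCT andbC.
Qed.

Section Cuts.
Variables (R : realFieldType) (V : finType) (w : {set V} -> R).
Implicit Types (X Y : {set V}) (S Z : {set {set V}}).

Lemma edgeP e : e \in edges w -> exists x y, [/\ x != y, e = [set x; y] & 0 < w e].
Proof. by rewrite inE => /andP [/cards2P [x [y [nxy ->]]] wp]; exists x, y. Qed.

Lemma delta_sub X : delta w X \subset edges w.
Proof. by apply/subsetP => e; rewrite inE => /andP []. Qed.

Lemma mem_delta2 X x y : x != y -> [set x; y] \in edges w ->
  ([set x; y] \in delta w X) = ((x \in X) != (y \in X)).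
Proof.
by move=> nxy he; rewrite inE he card_pairI //; case: (x \in X); case: (y \in X).
Qed.

Lemma deltaC X : delta w (~: X) = delta w X.
Proof.
apply/setP => e; case he: (e \in edges w); last by rewrite inE he [in RHS]inE he.
have [x [y [nxy exy _]]] := edgeP he; rewrite exy in he *.
by rewrite !mem_delta2 // !inE; case: (x \in X); case: (y \in X).
Qed.

Lemma mincut_intro Y : proper_shore Y ->
  (forall X, proper_shore X -> cut_weight w (delta w Y) <= cut_weight w (delta w X)) ->
  delta w Y \in mincuts w.
Proof.
move=> hY hmin; rewrite inE; apply/andP; split; first by apply/existsP; exists Y; rewrite hY eqxx.
by apply/forallP => X; apply/implyP; apply: hmin.
Qed.

Lemma mincut_le S X :
  S \in mincuts w -> proper_shore X -> cut_weight w S <= cut_weight w (delta w X).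
Proof. by rewrite inE => /andP [_ /forallP h] hX; have := h X; rewrite hX. Qed.

Lemma mincut_shore S : S \in mincuts w -> exists2 Y, proper_shore Y & S = delta w Y.
Proof. by rewrite inE => /andP [/existsP [Y /andP [hY /eqP ->]] _]; exists Y. Qed.

(* A mincut contained in another mincut equals it, as every edge has positive
   weight. *)
Lemma sub_mincut_eq S Z : S \in mincuts w -> Z \in mincuts w -> S \subset Z -> S = Z.
Proof.
move=> hS hZ hsub.
have [Y hY eS] := mincut_shore hS; have [X hX eZ] := mincut_shore hZ.
have wZ_edges : Z \subset edges w by rewrite eZ delta_sub.
have weq : cut_weight w Z = cut_weight w S.
  by apply/eqP; rewrite eq_le {1}eS mincut_le //= {1}eZ mincut_le.
have hZS : \sum_(e in Z :\: S) w e = 0.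
  move: weq; rewrite /cut_weight (big_setID S) /= (setIidPr hsub).
  by move/(congr1 (fun t => t - \sum_(i in S) w i)); rewrite /= addrAC subrr add0r.
have wpos e : e \in Z -> 0 < w e.
  by move=> he; have := subsetP wZ_edges e he; rewrite inE => /andP [].
apply/eqP; rewrite eqEsubset hsub; apply/subsetP => e he; apply/negPn/negP => heS.
have := psumr_eq0P (fun e' (he' : e' \in Z :\: S) => ltW (wpos e' (setDP he').1)) hZS.
by move=> /(_ e); rewrite inE heS he => /(_ isT) w0; have := wpos e he; rewrite w0 ltxx.
Qed.

Hypothesis w_ge0 : forall e : {set V}, #|e| = 2%N -> 0 <= w e.

(* The weight of a cut is the total weight of the pairs it separates (pairs
   of zero weight contribute nothing, so non-edges may be included). *)
Lemma cut_weight_pairs Y :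
  cut_weight w (delta w Y) = \sum_(x in Y) \sum_(y in ~: Y) w [set x; y].
Proof.
have -> : cut_weight w (delta w Y) =
          \sum_(e in [set e : {set V} | (#|e| == 2%N) && (#|e :&: Y| == 1%N)]) w e.
  rewrite /cut_weight big_mkcond [RHS]big_mkcond; apply: eq_bigr => e _.
  rewrite !inE; case h2: (#|e| == 2%N) => //=; case: (#|e :&: Y| == 1%N); rewrite ?andbF //=.
  by rewrite lt_def w_ge0 ?(eqP h2) // andbT; case: eqP.
have -> : [set e : {set V} | (#|e| == 2%N) && (#|e :&: Y| == 1%N)] =
          [set [set p.1; p.2] | p in setX Y (~: Y)].
  apply/setP => e; rewrite inE; apply/idP/imsetP.
  - case/andP => /cards2P [x [y [nxy ->]]]; rewrite card_pairI //.
    case hx: (x \in Y); case hy: (y \in Y) => //= _.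
    + by exists (x, y); rewrite // !inE hx hy.
    + by exists (y, x); rewrite ?inE ?hx ?hy // setUC.
  - case=> [[x y]]; rewrite !inE /= => /andP [hx hy] ->.
    have nxy : x != y by apply: contraNneq hy => <-.
    by rewrite cards2 nxy card_pairI // hx (negbTE hy).
rewrite big_imset /=; last first.
  move=> [x1 y1] [x2 y2]; rewrite !inE /= => /andP [hx1 hy1] /andP [hx2 hy2] heq.
  have : x1 \in [set x2; y2] by rewrite -heq !inE eqxx.
  rewrite !inE => /orP [/eqP e1|/eqP e1]; last by rewrite -e1 hx1 in hy2.
  have : y1 \in [set x2; y2] by rewrite -heq !inE eqxx orbT.
  rewrite !inE => /orP [/eqP e2|/eqP e2]; last by rewrite e1 e2.
  by rewrite e2 hx2 in hy1.
by rewrite pair_big_dep; apply: eq_bigl => -[x y]; rewrite !inE.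
Qed.

End Cuts.

Section Projection.
Variables (V : finType) (X : {set V}).
Implicit Types (x y : V) (Y : {set V}) (U : {set sep_vertex X}).

Definition pv x : sep_vertex X := insub x.

Definition ext U : {set V} := [set x | pv x \in U].

Lemma pv_Some x (a : {x : V | x \in X}) : (pv x == Some a) = (x == val a).
Proof.
rewrite /pv; case: insubP => [u hx <-|hx]; first by rewrite (inj_eq Some_inj) -val_eqE.
by apply/esym/negbTE; apply: contra hx => /eqP ->; exact: valP.
Qed.

Lemma pv_None x : (pv x == None) = (x \notin X).
Proof. by rewrite /pv; case: insubP => [u hx _|hx] //; rewrite hx. Qed.

Lemma pv_inj x y : x \in X -> pv y = pv x -> y = x.
Proof.
move=> hx; have ha : pv x = Some (Sub x hx) by apply/eqP; rewrite pv_Some.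
by rewrite ha => /eqP; rewrite pv_Some => /eqP.
Qed.

Lemma pv_surj (u : sep_vertex X) : ~: X != set0 -> exists x, pv x = u.
Proof.
case: u => [a|] hX; first by exists (val a); apply/eqP; rewrite pv_Some.
by case/set0Pn: hX => y hy; exists y; apply/eqP; rewrite pv_None -in_setC.
Qed.

Lemma ext_None : ext [set None] = ~: X.
Proof. by apply/setP => x; rewrite !inE pv_None. Qed.

Lemma proper_None : X != set0 -> proper_shore [set None : sep_vertex X].
Proof.
case/set0Pn => x hx; apply/andP; split; first by apply/set0Pn; exists None; rewrite inE.
by apply/eqP => /setP /(_ (Some (Sub x hx))); rewrite !inE.
Qed.

Lemma ext_proper U : ~: X != set0 -> proper_shore U -> proper_shore (ext U).
Proof.
move=> hX /andP [h0 hT]; apply/andP; split.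
  case/set0Pn: h0 => u hu; have [x hx] := pv_surj u hX.
  by apply/set0Pn; exists x; rewrite inE hx.
have : ~: U != set0 by apply: contra hT => /eqP h; rewrite -[U]setCK h setC0.
case/set0Pn => u hu; have [x hx] := pv_surj u hX.
apply: contraTneq hu => hE; have : x \in ext U by rewrite hE inE.
by rewrite !inE hx => ->.
Qed.

Lemma proper_of_ext U : proper_shore (ext U) -> proper_shore U.
Proof.
case/andP => h0 hT; apply/andP; split.
  by apply: contraNneq h0 => ->; apply/eqP/setP => x; rewrite !inE.
by apply: contraNneq hT => ->; apply/eqP/setP => x; rewrite !inE.
Qed.

(* A shore that lies inside X or contains V \ X is the preimage of its own
   image: such shores are exactly those coming from the separated graph. *)
Lemma ext_pv Y : (Y \subset X) || (~: X \subset Y) -> ext (pv @: Y) = Y.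
Proof.
move=> hY; apply/setP => x; rewrite inE; apply/imsetP/idP => [[y hy hxy]|]; last by exists x.
case: (boolP (x \in X)) => hx; first by rewrite -(pv_inj hx (esym hxy)).
have : y \notin X by rewrite -pv_None -hxy pv_None.
case/orP: hY => hY; first by rewrite (subsetP hY).
by move=> _; apply: (subsetP hY); rewrite inE.
Qed.

End Projection.

Section Separation.
Variables (R : realFieldType) (V : finType) (w : {set V} -> R) (X : {set V}).
Hypothesis w_ge0 : forall e : {set V}, #|e| = 2%N -> 0 <= w e.
Local Notation wX := (sepw w X).
Implicit Types (u v : sep_vertex X) (U : {set sep_vertex X}).

Lemma sum_fibre_Some (a : {x : V | x \in X}) (F : V -> R) :
  \sum_(x | pv X x == Some a) F x = F (val a).
Proof. by rewrite (eq_bigl (pred1 (val a))) ?big_pred1_eq // => x; rewrite pv_Some. Qed.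

Lemma sum_fibre_None (F : V -> R) :
  \sum_(x | pv X x == None) F x = \sum_(x in ~: X) F x.
Proof. by apply: eq_bigl => x; rewrite pv_None inE. Qed.

Lemma sepw_fibre u v : u != v ->
  wX [set u; v] = \sum_(x | pv X x == u) \sum_(y | pv X y == v) w [set x; y].
Proof.
have sepw_NS c : wX [set None; Some c] = \sum_(y in ~: X) w [set val c; y].
  rewrite /sepw !inE eqxx /= (eq_bigl (pred1 c)) ?big_pred1_eq // => x.
  by rewrite !inE.
case: u => [a|]; case: v => [c|] // _; rewrite ?sum_fibre_Some ?sum_fibre_None.
- rewrite /sepw !inE /= (_ : [set x | _] = [set a; c]) ?imsetU1 ?imset_set1 //.
  by apply/setP => x; rewrite !inE.
- by rewrite setUC sepw_NS.
- by rewrite sepw_NS; apply: eq_bigr => x _; rewrite sum_fibre_Some setUC.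
Qed.

Lemma fibre_pair_ge0 u v x y :
  u != v -> pv X x == u -> pv X y == v -> 0 <= w [set x; y].
Proof.
move=> nuv /eqP hx /eqP hy; apply: w_ge0; rewrite cards2; have -> // : x != y.
by apply: contraNneq nuv => exy; rewrite -hx -hy exy.
Qed.

Lemma sepw_ge0 (e : {set sep_vertex X}) : #|e| = 2%N -> 0 <= wX e.
Proof.
move=> /eqP /cards2P [u [v [nuv ->]]]; rewrite sepw_fibre //.
by apply: sumr_ge0 => x hx; apply: sumr_ge0 => y hy; exact: (fibre_pair_ge0 nuv hx hy).
Qed.

Lemma sepw_gt0 x y : 0 < w [set x; y] -> pv X x != pv X y ->
  0 < wX [set pv X x; pv X y].
Proof.
move=> wp nxy; rewrite sepw_fibre // (bigD1 x) ?eqxx //= (bigD1 y) ?eqxx //=.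
apply: (lt_le_trans wp); rewrite -addrA lerDl; apply: addr_ge0.
  by apply: sumr_ge0 => y' /andP [hy' _]; apply: (fibre_pair_ge0 nxy).
apply: sumr_ge0 => x' /andP [hx' _]; apply: sumr_ge0 => y' hy'.
exact: (fibre_pair_ge0 nxy).
Qed.

Lemma sum_cut_fibres U (F : V -> V -> R) :
  \sum_(x in ext U) \sum_(y in ~: ext U) F x y =
  \sum_(u in U) \sum_(v in ~: U) \sum_(x | pv X x == u) \sum_(y | pv X y == v) F x y.
Proof.
rewrite (partition_big (pv X) (mem U)) /=; last by move=> x; rewrite inE.
apply: eq_bigr => u hu; rewrite (eq_bigl (fun x => pv X x == u)); last first.
  by move=> x; rewrite inE; case: (pv X x =P u) => [->|]; rewrite ?andbF ?hu.
rewrite exchange_big (partition_big (pv X) (mem (~: U))) /=; last by move=> x; rewrite !inE.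
apply: eq_bigr => v hv; rewrite exchange_big /=; apply: eq_bigr => x _.
apply: eq_bigl => y; rewrite !inE; case: (pv X y =P v) => [->|]; rewrite ?andbF //.
by rewrite inE in hv; rewrite hv.
Qed.

Lemma cut_weight_sep U : cut_weight wX (delta wX U) = cut_weight w (delta w (ext U)).
Proof.
rewrite (cut_weight_pairs sepw_ge0) (cut_weight_pairs w_ge0) sum_cut_fibres.
apply: eq_bigr => u hu; apply: eq_bigr => v hv; rewrite sepw_fibre //.
by apply: contraTneq hu => ->; rewrite inE in hv.
Qed.

Lemma mem_delta_sep U e : e \in edges w ->
  (e \in delta w (ext U)) = (pv X @: e \in delta wX U).
Proof.
move=> he; have [x [y [nxy exy wp]]] := edgeP he; rewrite exy in he wp *.
rewrite mem_delta2 // imsetU1 imset_set1 !inE.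
case: (boolP (pv X x == pv X y)) => [/eqP exy'|npv].
  by rewrite exy' setUid cards1 eqxx.
by rewrite cards2 npv sepw_gt0 //= card_pairI //; case: (pv X x \in U); case: (pv X y \in U).
Qed.

Lemma delta_ext_sub U : delta w (ext U) \subset delta w X :|: EX w X.
Proof.
apply/subsetP => e he; have hee := subsetP (delta_sub w _) e he.
have [x [y [nxy exy _]]] := edgeP hee; rewrite exy in he hee *.
rewrite mem_delta2 // !inE in he; rewrite inE mem_delta2 //.
case hx: (x \in X); case hy: (y \in X) => //=.
  by rewrite inE hee; apply/subsetP => z; rewrite !inE => /orP [] /eqP ->.
have /eqP ex : pv X x == None by rewrite pv_None hx.
have /eqP ey : pv X y == None by rewrite pv_None hy.
by move: he; rewrite ex ey eqxx.
Qed.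

End Separation.

Section Incidence.
Variables (R : realFieldType) (V : finType) (w : {set V} -> R) (X : {set V}).
Hypothesis w_ge0 : forall e : {set V}, #|e| = 2%N -> 0 <= w e.
Local Notation wX := (sepw w X).

Definition sep_incidence : 'M[R]_(#|{: edge_t wX}|, #|{: edge_t w}|) :=
  \matrix_(i < #|{: edge_t wX}|, j < #|{: edge_t w}|)
    ((pv X @: val (enum_val j) == val (enum_val i))%:R).

Lemma chi_incidence (S : {set {set V}}) (S' : {set {set sep_vertex X}}) :
  (forall e, e \in edges w -> (e \in S) = (pv X @: e \in S')) ->
  S' \subset edges wX ->
  chi w S = chi wX S' *m sep_incidence.
Proof.
move=> hS hS'; apply/rowP => j; rewrite !mxE.
set e := val (enum_val j); have he : e \in edges w := valP (enum_val j).
rewrite hS //; case: (boolP (pv X @: e \in edges wX)) => hb.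
  pose k0 : edge_t wX := Sub (pv X @: e) hb.
  rewrite (bigD1 (enum_rank k0)) //= big1 ?addr0.
    by rewrite !mxE enum_rankK /= eqxx mulr1.
  move=> i ni; rewrite !mxE; case: eqP => [hi|]; last by rewrite mulr0.
  suff : i == enum_rank k0 by rewrite (negbTE ni).
  by apply/eqP; rewrite -[i]enum_valK; congr enum_rank; apply: val_inj; rewrite /= hi.
rewrite (negbTE (contra (subsetP hS' _) hb)) big1 // => i _.
rewrite !mxE; case: eqP => [hi|]; last by rewrite mulr0.
by move: hb; rewrite hi (valP (enum_val i)).
Qed.

(* Every edge of G_X is the image of an edge of G: a positive fibre sum has
   a positive term. *)
Lemma sep_edge_lift (e' : {set sep_vertex X}) :
  e' \in edges wX -> exists2 e, e \in edges w & pv X @: e = e'.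
Proof.
rewrite inE => /andP [/cards2P [u [v [nuv ->]]]]; rewrite sepw_fibre // => hpos.
have /eqP sum_neq0 := lt0r_neq0 hpos.
have [x /andP [hx /lt0r_neq0/eqP sumx_neq0]] := psumr_neq0P
  (fun x hx => sumr_ge0 _ (fun y hy => fibre_pair_ge0 w_ge0 nuv hx hy)) sum_neq0.
have [y /andP [hy wp]] :=
  psumr_neq0P (fun y hy => fibre_pair_ge0 w_ge0 nuv hx hy) sumx_neq0.
have nxy : x != y by apply: contraNneq nuv => exy; rewrite -(eqP hx) -(eqP hy) exy.
exists [set x; y]; last by rewrite imsetU1 imset_set1 (eqP hx) (eqP hy).
by rewrite inE cards2 nxy wp.
Qed.

Lemma sep_incidence_free : row_free sep_incidence.
Proof.
have lift (i : 'I_#|{: edge_t wX}|) :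
    exists j : 'I_#|{: edge_t w}|, pv X @: val (enum_val j) == val (enum_val i).
  have [e he <-] := sep_edge_lift (valP (enum_val i)).
  by exists (enum_rank (Sub e he : edge_t w)); rewrite enum_rankK.
apply/row_freeP; pose sel i := xchoose (lift i).
exists (\matrix_(j, i) (j == sel i)%:R); apply/matrixP => i i'; rewrite !mxE.
rewrite (bigD1 (sel i')) //= big1 ?addr0 => [|j nj]; last by rewrite !mxE (negbTE nj) mulr0.
rewrite !mxE eqxx mulr1 (eqP (xchooseP (lift i'))) val_eqE.
by rewrite (inj_eq enum_val_inj) eq_sym.
Qed.

Lemma chi_delta_ext (U : {set sep_vertex X}) :
  chi w (delta w (ext U)) = chi wX (delta wX U) *m sep_incidence.
Proof. by apply: chi_incidence (delta_sub _ _) => e he; apply: mem_delta_sep. Qed.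

End Incidence.

Section Correspondence.
Variables (R : realFieldType) (V : finType) (w : {set V} -> R) (X : {set V}).
Hypothesis w_ge0 : forall e : {set V}, #|e| = 2%N -> 0 <= w e.
Hypothesis X_proper : proper_shore X.
Hypothesis Z_crossless : crossless w (delta w X).
Local Notation wX := (sepw w X).
Local Notation Z := (delta w X).
Local Notation side_mincuts := [set S in mincuts w | S \subset Z :|: EX w X].

Let Z_mincut : Z \in mincuts w.
Proof. by case/andP: Z_crossless. Qed.

Let X_nonempty : X != set0.
Proof. by case/andP: X_proper. Qed.

Let CX_proper : proper_shore (~: X).
Proof. by rewrite proper_shoreC. Qed.

Let CX_nonempty : ~: X != set0.
Proof. by case/andP: CX_proper. Qed.

(* A mincut of G_X lifts to a mincut of G inside Z u E(X): its weight is at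
   most that of the star cut at None, which is the weight of Z. *)
Lemma sep_mincut_lift S' : S' \in mincuts wX ->
  exists2 U, S' = delta wX U & delta w (ext U) \in side_mincuts.
Proof.
move=> hS'; have [U hU eS'] := mincut_shore hS'; exists U => //.
rewrite inE delta_ext_sub andbT; apply: mincut_intro => [|Y hY].
  exact: ext_proper.
rewrite -cut_weight_sep // -eS'; apply: (le_trans (mincut_le hS' (proper_None X_nonempty))).
by rewrite cut_weight_sep // ext_None deltaC mincut_le.
Qed.

Lemma side_mincut_unsplit S Y : S \in side_mincuts -> S = delta w Y ->
  (forall x y, x \in X -> y \in X -> (x \in Y) = (y \in Y)) -> S = Z.
Proof.
rewrite inE => /andP [hS hsub] eS hXY; apply: sub_mincut_eq hS Z_mincut _.
apply/subsetP => e he; have := subsetP hsub e he; rewrite inE => /orP [] // hEX.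
case/setIdP: hEX => hee hsubX; have [x [y [nxy exy _]]] := edgeP hee.
rewrite exy in he hee hsubX.
have hx : x \in X by apply: (subsetP hsubX); rewrite !inE eqxx.
have hy : y \in X by apply: (subsetP hsubX); rewrite !inE eqxx orbT.
by move: he; rewrite eS mem_delta2 // (hXY x y hx hy) eqxx.
Qed.

(* Every mincut inside Z u E(X) has a shore lying inside X or containing
   V \ X: otherwise its shore would cross X, as Z is crossless. *)
Lemma side_mincut_shore S : S \in side_mincuts ->
  exists Y, [/\ proper_shore Y, S = delta w Y & (Y \subset X) || (~: X \subset Y)].
Proof.
move=> hSM; have hS : S \in mincuts w by case/setIdP: hSM.
case: (eqVneq S Z) => [->|nSZ].
  by exists (~: X); rewrite deltaC subxx orbT.
have [Y hY eS] := mincut_shore hS; exists Y; split => //.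
have : ~~ crossing Y X.
  case/andP: Z_crossless => _ /forallP /(_ S); rewrite hS nSZ /=; apply: contra => hc.
  by apply/existsP; exists Y; apply/existsP; exists X; rewrite eS !eqxx hc.
rewrite /crossing !negb_and !negbK; case/or4P => hc.
- case/eqP: nSZ; apply: side_mincut_unsplit hSM eS _ => x y hx hy.
  have notY z : z \in X -> z \notin Y.
    by move=> hz; apply: contraTN hc => hzY; apply/set0Pn; exists z; rewrite inE hzY.
  by rewrite !(negbTE (notY _ _)).
- by rewrite -setD_eq0 hc.
- case/eqP: nSZ; apply: side_mincut_unsplit hSM eS _ => x y hx hy.
  have inY z : z \in X -> z \in Y.
    by move=> hz; apply: contraTT hc => hzY; apply/set0Pn; exists z; rewrite inE hzY.
  by rewrite !inY.
- apply/orP; right; apply/subsetP => x hx; apply: contraTT hc => hxY.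
  by apply/set0Pn; exists x; rewrite !inE negb_or hxY -in_setC hx.
Qed.

Lemma side_mincut_project S : S \in side_mincuts ->
  exists2 U, delta wX U \in mincuts wX & S = delta w (ext U).
Proof.
move=> hSM; have hS : S \in mincuts w by case/setIdP: hSM.
have [Y [hY eS side]] := side_mincut_shore hSM.
have eY : ext (pv X @: Y) = Y by apply: ext_pv.
exists (pv X @: Y); last by rewrite eY.
apply: mincut_intro => [|U hU]; first by apply: proper_of_ext; rewrite eY.
by rewrite !cut_weight_sep // eY -eS mincut_le // ext_proper.
Qed.

End Correspondence.

Lemma span_dim_transfer (R : realFieldType) (V V' : finType)
    (w : {set V} -> R) (w' : {set V'} -> R)
    (F : {set {set {set V}}}) (F' : {set {set {set V'}}})
    (M : 'M[R]_(#|{: edge_t w'}|, #|{: edge_t w}|)) :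
  row_free M ->
  (forall S, S \in F -> exists2 S', S' \in F' & chi w S = chi w' S' *m M) ->
  (forall S', S' \in F' -> exists2 S, S \in F & chi w S = chi w' S' *m M) ->
  span_dim w F = span_dim w' F'.
Proof.
move=> freeM FtoF' F'toF; rewrite /span_dim -(mxrankMfree _ freeM).
apply/eqmx_rank/andP; split.
  apply/sumsmx_subP => S hS; rewrite genmxE; have [S' hS' ->] := FtoF' S hS.
  by apply: submxMr; apply: (sumsmx_sup S') => //; rewrite genmxE.
rewrite sumsmxMr_gen; apply/sumsmx_subP => S' hS'; rewrite genmxE.
have [S hS eS] := F'toF S' hS'; rewrite (eqmxMr _ (genmxE _)) -eS.
by apply: (sumsmx_sup S) => //; rewrite genmxE.
Qed.

Lemma sep_span_dim (R : realFieldType) (V : finType) (w : {set V} -> R) (X : {set V}) :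
  (forall e : {set V}, #|e| = 2%N -> 0 <= w e) ->
  proper_shore X -> crossless w (delta w X) ->
  span_dim w [set S in mincuts w | S \subset delta w X :|: EX w X] = cdim (sepw w X).
Proof.
move=> w_ge0 hX hZ; apply: (span_dim_transfer (sep_incidence_free X w_ge0)).
  move=> S /(side_mincut_project w_ge0 hX hZ) [U hU ->].
  by exists (delta (sepw w X) U); rewrite ?chi_delta_ext.
move=> S' /(sep_mincut_lift w_ge0 hX hZ) [U -> hU].
by exists (delta w (ext U)); rewrite ?chi_delta_ext.
Qed.

Theorem lemma13 (R : realFieldType) (V : finType) (w : {set V} -> R)
    (X0 : {set V}) :
  (forall e : {set V}, #|e| = 2%N -> 0 <= w e) ->
  proper_shore X0 ->
  delta w X0 \in mincuts w ->
  crossless w (delta w X0) ->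
  ~~ star_cut w (delta w X0) ->
  forall b : bool,
    let Xb := if b then ~: X0 else X0 in
    span_dim w [set S in mincuts w | S \subset delta w X0 :|: EX w Xb]
    = cdim (sepw w Xb).
Proof.
move=> w_ge0 hX0 _ hZ _ b; case: b => /=; last exact: sep_span_dim.
by rewrite -deltaC; apply: sep_span_dim; rewrite ?proper_shoreC ?deltaC.
Qed.
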